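(* Let $A$ be an $n\times n$ matrix with non-negative real entries and $\|A\|_{\max}\le 1$. Then every eigenvalue $\lambda$ of $A$ satisfies $\mathrm{Re}(\lambda) \ge -n/2$.
   Context: $\|A\|_{\max}$ denotes the largest absolute value of an entry of $A$. *)

(* Real entries: an arbitrary real closed field R;
   complex eigenvalues live in R[i] (mathcomp-real-closed complex). *)
From HB Require Import structures.
From mathcomp Require Import all_boot all_order all_algebra.
From mathcomp Require Export complex.
Set Implicit Arguments. Unset Strict Implicit. Unset Printing Implicit Defensive.
Import Order.TTheory GRing.Theory Num.Theory.
Local Open Scope ring_scope.

Definition max_norm (R : realDomainType) (m n : nat) (A : 'M[R]_(m, n)) : R :=
  \big[Num.max/0]_(i < m) \big[Num.max/0]_(j < n) `|A i j|.

From HB Require Import structures.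
From mathcomp Require Import all_boot all_order all_algebra.
From mathcomp Require Import complex ring lra.
Set Implicit Arguments. Unset Strict Implicit. Unset Printing Implicit Defensive.
Import Order.TTheory GRing.Theory Num.Theory.
Local Open Scope ring_scope.

(* Take a left eigenvector v = x + i y, so v A = lambda v.  Pairing with the
   conjugate of v gives the Rayleigh identity
     Re lambda * (|x|^2 + |y|^2) = Q(x) + Q(y),  Q(x) = sum_(i,j) a_ij x_i x_j.
   Since 0 <= a_ij <= 1, each term a_ij x_i x_j is at least
   min(0, x_i x_j) >= -(x_i - x_j)^2 / 4, and
   sum_(i,j) (x_i - x_j)^2 = 2n |x|^2 - 2 (sum_i x_i)^2 <= 2n |x|^2,
   so Q(x) >= -(n/2) |x|^2. *)

Lemma normr_le_max_norm (R : realDomainType) (m n : nat) (A : 'M[R]_(m, n)) i j :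
  `|A i j| <= max_norm A.
Proof. by apply: le_trans (le_bigmax _ _ i); apply: le_bigmax. Qed.

Lemma sum_sqr_diff (R : comPzRingType) (n : nat) (x : 'I_n -> R) :
  \sum_i \sum_j (x i - x j) ^+ 2 =
    (\sum_i x i ^+ 2) *+ (2 * n) - (\sum_i x i) ^+ 2 *+ 2.
Proof.
have sqr_sum : (\sum_i x i) ^+ 2 = \sum_i \sum_j x i * x j.
  by rewrite expr2 mulr_suml; apply: eq_bigr => i _; rewrite mulr_sumr.
under eq_bigr => i _ do under eq_bigr => j _ do rewrite sqrrB.
under eq_bigr => i _ do rewrite !big_split /= sumrN sumr_const card_ord sumrMnl.
rewrite !big_split /= sumrN !sumrMnl sumr_const card_ord -sqr_sum.
by rewrite addrAC -mulrnDr addnn mul2n.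
Qed.

Section QuadraticForm.
Variables (R : realFieldType) (n : nat).

Definition qform (A : 'M[R]_n) (x : 'I_n -> R) : R :=
  \sum_i \sum_j A i j * (x i * x j).

Lemma mul_unit_itv_ge (a u w : R) :
  0 <= a <= 1 -> - (u - w) ^+ 2 / 4 <= a * (u * w).
Proof.
case/andP=> a_ge0 a_le1; have [uw_ge0 | uw_lt0] := lerP 0 (u * w).
  by rewrite (le_trans _ (mulr_ge0 a_ge0 uw_ge0)) // mulNr oppr_le0 divr_ge0 ?sqr_ge0.
have uw_le : u * w <= a * (u * w).
  by rewrite -subr_ge0 -{2}[u * w]mul1r -mulrBl mulr_le0 ?subr_le0 // ltW.
have := sqr_ge0 (u + w); rewrite sqrrD sqrrB; lra.
Qed.

Lemma qform_ge (A : 'M[R]_n) (x : 'I_n -> R) :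
  (forall i j, 0 <= A i j <= 1) ->
  - (n%:R / 2) * \sum_i x i ^+ 2 <= qform A x.
Proof.
move=> A01; apply: le_trans (_ : - (\sum_i \sum_j (x i - x j) ^+ 2) / 4 <= _).
  rewrite sum_sqr_diff -[_ *+ (2 * n)]mulr_natr -[_ *+ 2]mulr_natr natrM.
  have := sqr_ge0 (\sum_i x i); lra.
rewrite -sumrN mulr_suml; apply: ler_sum => i _.
rewrite -sumrN mulr_suml; apply: ler_sum => j _.
exact: mul_unit_itv_ge.
Qed.

End QuadraticForm.

Section Rayleigh.
Variables (R : rcfType) (n : nat).
Local Open Scope complex_scope.

Lemma Re_mul_real_conj (z w : R[i]) (a : R) :
  complex.Re (z * a%:C * w^*) =
    a * (complex.Re z * complex.Re w + complex.Im z * complex.Im w).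
Proof. by case: z => ? ?; case: w => ? ?; simpc => /=; ring. Qed.

Lemma mulc_conj (z : R[i]) :
  z * z^* = (complex.Re z ^+ 2 + complex.Im z ^+ 2)%:C.
Proof. by case: z => a b; simpc; rewrite !expr2 [b * a]mulrC addNr. Qed.

Lemma Re_mul_real (z : R[i]) (a : R) : complex.Re (z * a%:C) = complex.Re z * a.
Proof. by case: z => ? ?; simpc. Qed.

(* The linear structure of [Re] is declared on the alias [Rcomplex R]. *)
Lemma Re_sum (I : Type) (r : seq I) (F : I -> R[i]) :
  complex.Re (\sum_(k <- r) F k) = \sum_(k <- r) complex.Re (F k).
Proof. exact: (raddf_sum (@complex.Re R : Rcomplex R -> R)). Qed.

Lemma Re_left_eigen_qform (A : 'M[R]_n) (v : 'rV[R[i]]_n) (lambda : R[i]) :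
  v *m map_mx (real_complex R) A = lambda *: v ->
  complex.Re lambda *
    (\sum_j complex.Re (v 0 j) ^+ 2 + \sum_j complex.Im (v 0 j) ^+ 2) =
  qform A (fun j => complex.Re (v 0 j)) + qform A (fun j => complex.Im (v 0 j)).
Proof.
move=> vA.
have sum_conj : \sum_j v 0 j * (v 0 j)^* =
    (\sum_j (complex.Re (v 0 j) ^+ 2 + complex.Im (v 0 j) ^+ 2))%:C.
  by rewrite rmorph_sum; apply: eq_bigr => j _; rewrite mulc_conj.
have rayleigh : \sum_j \sum_i v 0 i * (A i j)%:C * (v 0 j)^* =
                lambda * \sum_j v 0 j * (v 0 j)^*.
  rewrite mulr_sumr; apply: eq_bigr => j _.
  move/rowP/(_ j): vA; rewrite !mxE => vAj.
  rewrite -mulr_suml mulrA -vAj; congr (_ * _).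
  by apply: eq_bigr => i _; rewrite mxE.
move/(congr1 (@complex.Re R)): rayleigh.
rewrite sum_conj Re_mul_real big_split /= => <-.
rewrite /qform -big_split /= exchange_big.
rewrite Re_sum; apply: eq_bigr => i _; rewrite Re_sum -big_split /=.
by apply: eq_bigr => j _; rewrite Re_mul_real_conj mulrDr.
Qed.

Lemma sum_sqr_Re_Im_gt0 (v : 'rV[R[i]]_n) :
  v != 0 -> 0 < \sum_j complex.Re (v 0 j) ^+ 2 + \sum_j complex.Im (v 0 j) ^+ 2.
Proof.
move=> v_neq0; have [j vj_neq0] : exists j, v 0 j != 0.
  apply/existsP; apply: contraNT v_neq0 => /existsPn v0.
  by apply/eqP/rowP => j; rewrite mxE; apply/eqP/negPn/v0.
have vj_gt0 : 0 < complex.Re (v 0 j) ^+ 2 + complex.Im (v 0 j) ^+ 2.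
  by rewrite -ltcR add_Re2_Im2 exprn_gt0 // normr_gt0.
rewrite -big_split (bigD1 j) //= (lt_le_trans vj_gt0) // lerDl.
by apply: sumr_ge0 => k _; rewrite addr_ge0 ?sqr_ge0.
Qed.

End Rayleigh.

Theorem lemma6 (R : rcfType) (n : nat) (A : 'M[R]_n) :
  (forall i j, 0 <= A i j) ->
  max_norm A <= 1 ->
  forall lambda : R[i],
    eigenvalue (map_mx (real_complex R) A) lambda ->
    - (n%:R / 2 : R) <= complex.Re lambda.
Proof.
move=> A_ge0 A_le1 lambda /eigenvalueP [v vA v_neq0].
have A01 i j : 0 <= A i j <= 1.
  by rewrite A_ge0 /= (le_trans (ler_norm _)) // (le_trans (normr_le_max_norm _ i j)).
rewrite -(ler_pM2r (sum_sqr_Re_Im_gt0 v_neq0)) (Re_left_eigen_qform vA) mulrDr.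
by rewrite lerD // qform_ge.
Qed.
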